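(* Let $L_1,L_2>0$, $N_{\max}\ge1$, $M>0$, $\bar c\in(0,1)$, and let $t^*$ be the unique positive solution of $e^{L_2t^*}-\big(L_2+\frac{L_2^2}{L_1\sqrt{N_{\max}}}\big)t^*-1=0$. Define $$\bar t:=\sup\Big\{t>0:\ e^{L_2t}-\Big(L_2+\bar c\frac{L_2^2}{L_1\sqrt{N_{\max}}}\Big)t-1<0\Big\}.$$ Then $0<\bar t<t^*$, and the functions $H_1(t):=Mt$, $H_\kappa(t):=\int_0^te^{L_2(t-s)}L_1\sqrt{N_{\max}}H_{\kappa-1}(s)\,ds$ ($\kappa\ge2$) satisfy $H_\kappa(t)\le\bar c^{\,\kappa-1}Mt$ for all $t\in[0,\bar t]$ and all $\kappa\ge1$. *)

From Stdlib Require Import Reals Lra Classical ClassicalEpsilon.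
Open Scope R_scope.

(* Total Riemann integral: RiemannInt when f is Riemann integrable on [a,b], 0 otherwise. *)
Definition Rint (f : R -> R) (a b : R) : R :=
  match excluded_middle_informative
          (exists v : R, exists pr : Riemann_integrable f a b, RiemannInt pr = v) with
  | left h => proj1_sig (constructive_indefinite_description _ h)
  | right _ => 0
  end.
(* RiemannInt does not depend on the integrability proof (RiemannInt_P5),
   so Rint f a b is the Riemann integral whenever f is integrable on [a,b]. *)

(* Hfun L1 L2 Nmax M k t = H_k(t) for k >= 1:
   H_1(t) = M t,  H_k(t) = int_0^t e^{L2 (t-s)} L1 sqrt(Nmax) H_{k-1}(s) ds  (k >= 2).
   The index k = 0 is a dummy, set equal to H_1. *)
Fixpoint Hfun (L1 L2 : R) (Nmax : nat) (M : R) (k : nat) : R -> R :=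
  match k with
  | O => fun t => M * t
  | S k' =>
      match k' with
      | O => fun t => M * t
      | S _ => fun t =>
          Rint (fun s => exp (L2 * (t - s)) * L1 * sqrt (INR Nmax)
                          * Hfun L1 L2 Nmax M k' s) 0 t
      end
  end.

(* Write e(t) := exp(L2 t) - (L2 + B) t - 1 with B := cbar L2^2 / (L1 sqrt Nmax).
   Since e is convex with e(0) = 0 and e < 0 near 0+, e <= 0 on [0, tbar];
   as cbar < 1, e(tstar) > 0, and convexity then keeps tbar away from tstar.
   Integrating the bound H_k(s) <= cbar^(k-1) M s against the kernel gives
   H_(k+1)(t) <= L1 sqrt(Nmax) cbar^(k-1) M (exp(L2 t) - 1 - L2 t) / L2^2,
   and e(t) <= 0 is exactly what turns the right-hand side into cbar^k M t. *)

From Stdlib Require Import Reals Lra Psatz ClassicalEpsilon FunctionalExtensionality.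
From Coquelicot Require Import Coquelicot.
Open Scope R_scope.

Definition excess (a B t : R) : R := exp (a * t) - (a + B) * t - 1.

Definition excess_neg (a B : R) (t : R) : Prop := 0 < t /\ excess a B t < 0.

Lemma exp_tangent_le (a s u : R) : exp (a * u) * (1 + a * s - a * u) <= exp (a * s).
Proof.
  replace (a * s) with (a * u + (a * s - a * u)) at 2 by ring.
  rewrite exp_plus.
  pose proof (exp_ineq1_le (a * s - a * u)).
  pose proof (exp_pos (a * u)).
  nra.
Qed.

(* The tangent line of the convex function [excess] at [u] has positive
   slope and its root [v] lies left of [u]; every negative point lies left of [v]. *)
Lemma excess_neg_bounded_away (a B u : R) :
  0 < u -> 0 < excess a B u ->
  exists v, v < u /\ forall s, excess_neg a B s -> s <= v.
Proof.
  unfold excess_neg, excess; intros hu hg.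
  set (D := a * exp (a * u) - (a + B)).
  pose proof (exp_tangent_le a 0 u) as H0.
  rewrite Rmult_0_r, exp_0 in H0.
  assert (Dpos : D > 0) by (unfold D; nra).
  exists (u - (exp (a * u) - (a + B) * u - 1) / D); split.
  - assert (0 < (exp (a * u) - (a + B) * u - 1) / D)
      by (apply Rdiv_lt_0_compat; lra).
    lra.
  - intros s [hs hgs].
    pose proof (exp_tangent_le a s u).
    assert (s * D <= u * D - (exp (a * u) - (a + B) * u - 1)) by (unfold D; nra).
    apply (Rmult_le_reg_r D); [lra|].
    replace ((u - (exp (a * u) - (a + B) * u - 1) / D) * D)
      with (u * D - (exp (a * u) - (a + B) * u - 1)) by (field; lra).
    lra.
Qed.

Lemma excess_chord (a B t s : R) :
  0 <= t -> t <= s -> excess a B t * s <= t * excess a B s.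
Proof.
  unfold excess; intros h1 h2.
  pose proof (exp_tangent_le a 0 t) as H0.
  rewrite Rmult_0_r, exp_0 in H0.
  pose proof (exp_tangent_le a s t) as H1.
  assert (s * exp (a * t) - s <= t * exp (a * s) - t).
  { assert ((s - t) * (exp (a * t) * (1 + 0 - a * t)) <= (s - t) * 1)
      by (apply Rmult_le_compat_l; lra).
    assert (t * (exp (a * t) * (1 + a * s - a * t)) <= t * exp (a * s))
      by (apply Rmult_le_compat_l; lra).
    nra. }
  nra.
Qed.

(* Near 0, [exp x <= 1 + x + 2 x^2] and the quadratic term loses to [B t]. *)
Lemma excess_neg_exists (a B : R) : 0 < a -> 0 < B -> exists t, excess_neg a B t.
Proof.
  intros ha hB.
  set (t := Rmin (/ (2 * a)) (B / (4 * a ^ 2))).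
  assert (ht1 : t <= / (2 * a)) by apply Rmin_l.
  assert (ht2 : t <= B / (4 * a ^ 2)) by apply Rmin_r.
  assert (htpos : 0 < t).
  { apply Rmin_glb_lt; [apply Rinv_0_lt_compat; lra | apply Rdiv_lt_0_compat; nra]. }
  exists t; split; [exact htpos|]; unfold excess.
  set (x := a * t).
  assert (hx : x <= / 2).
  { apply (Rmult_le_compat_l a) in ht1; [|lra].
    replace (a * / (2 * a)) with (/ 2) in ht1 by (field; lra).
    unfold x; lra. }
  assert (hx0 : 0 < x) by (unfold x; nra).
  assert (hBt : 4 * a ^ 2 * t <= B).
  { apply (Rmult_le_compat_l (4 * a ^ 2)) in ht2; [|nra].
    replace (4 * a ^ 2 * (B / (4 * a ^ 2))) with B in ht2 by (field; lra).
    lra. }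
  assert (hE : exp x * (1 - x) <= 1).
  { pose proof (exp_ineq1_le (- x)). pose proof (exp_pos x).
    assert (exp x * exp (- x) = 1)
      by (rewrite <- exp_plus, Rplus_opp_r; apply exp_0).
    nra. }
  assert (hE2 : exp x <= 1 + x + 2 * x ^ 2).
  { assert ((1 - x) * (1 + x + 2 * x ^ 2) >= 1) by nra. nra. }
  assert (x ^ 2 = a ^ 2 * t * t) by (unfold x; ring).
  assert (B * t >= 4 * a ^ 2 * t * t) by nra.
  unfold x in *; nra.
Qed.

Section ExcessLub.

Variables a B l : R.
Hypothesis hlub : is_lub (excess_neg a B) l.

Lemma excess_lub_pos : 0 < a -> 0 < B -> 0 < l.
Proof.
  intros ha hB.
  destruct (excess_neg_exists a B ha hB) as [t ht].
  pose proof (proj1 hlub t ht).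
  destruct ht; lra.
Qed.

Lemma excess_lub_lt (u : R) : 0 < u -> 0 < excess a B u -> l < u.
Proof.
  intros hu hg.
  destruct (excess_neg_bounded_away a B u hu hg) as [v [hvu hv]].
  assert (l <= v) by (apply (proj2 hlub); exact hv).
  lra.
Qed.

Lemma excess_le0_below_lub (t : R) :
  0 < l -> 0 <= t <= l -> excess a B t <= 0.
Proof.
  intros hl [ht0 htl].
  assert (hel : excess a B l <= 0).
  { apply Rnot_lt_le; intro hpos.
    pose proof (excess_lub_lt l hl hpos); lra. }
  pose proof (excess_chord a B t l ht0 htl).
  nra.
Qed.

End ExcessLub.

Lemma Rint_le (f : R -> R) (a b U : R) :
  (forall pr : Riemann_integrable f a b, RiemannInt pr <= U) ->
  0 <= U -> Rint f a b <= U.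
Proof.
  intros H H0; unfold Rint.
  destruct (excluded_middle_informative _) as [h|h]; [|exact H0].
  destruct (constructive_indefinite_description _ h) as [v [pr Hv]]; simpl.
  rewrite <- Hv; apply H.
Qed.

Lemma exp_kernel_linear_integrable (a C t : R) :
  Riemann_integrable (fun s => exp (a * (t - s)) * C * s) 0 t.
Proof.
  apply ex_RInt_Reals_0, (ex_RInt_continuous (V := R_CompleteNormedModule)).
  intros y _.
  apply (ex_derive_continuous (fun s => exp (a * (t - s)) * C * s)).
  auto_derive; auto.
Qed.

Lemma RiemannInt_exp_kernel_linear (a C t : R) (ha : 0 < a) :
  forall pr : Riemann_integrable (fun s => exp (a * (t - s)) * C * s) 0 t,
  RiemannInt pr = C * (exp (a * t) - 1 - a * t) / a ^ 2.
Proof.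
  intros pr; rewrite <- RInt_Reals.
  set (F := fun s => C * (- (exp (a * (t - s)) * (a * s + 1)) / a ^ 2)).
  assert (HI : is_RInt (fun s => exp (a * (t - s)) * C * s) 0 t (minus (F t) (F 0))).
  { apply (is_RInt_derive F).
    - intros x _; unfold F; auto_derive; [auto|].
      replace (t + - x) with (t - x) by ring.
      field; lra.
    - intros y _.
      apply (ex_derive_continuous (fun s => exp (a * (t - s)) * C * s)).
      auto_derive; auto. }
  rewrite (is_RInt_unique _ _ _ _ HI); unfold F, minus, plus, opp; simpl.
  rewrite Rminus_diag, Rminus_0_r, Rmult_0_r, exp_0.
  field; lra.
Qed.

Lemma Rint_exp_kernel_le (a K C t : R) (f : R -> R) :
  0 < a -> 0 <= K -> 0 <= C -> 0 <= t ->
  (forall s, 0 <= s <= t -> f s <= C * s) ->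
  Rint (fun s => exp (a * (t - s)) * K * f s) 0 t
    <= K * C * (exp (a * t) - 1 - a * t) / a ^ 2.
Proof.
  intros ha hK hC ht hf.
  assert (hbound : 0 <= K * C * (exp (a * t) - 1 - a * t) / a ^ 2).
  { pose proof (exp_ineq1_le (a * t)).
    apply Rdiv_le_0_compat; [|nra].
    apply Rmult_le_pos; [apply Rmult_le_pos|]; lra. }
  apply Rint_le; [intros pr | exact hbound].
  pose proof (exp_kernel_linear_integrable a (K * C) t) as pr'.
  rewrite <- (RiemannInt_exp_kernel_linear a (K * C) t ha pr').
  apply RiemannInt_P19; [exact ht|].
  intros s hs.
  pose proof (exp_pos (a * (t - s))).
  replace (exp (a * (t - s)) * (K * C) * s)
    with (exp (a * (t - s)) * K * (C * s)) by ring.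
  apply Rmult_le_compat_l; [nra | apply hf; lra].
Qed.

Lemma Hfun_succ_le (L1 L2 : R) (Nmax : nat) (M c t : R) (n : nat) :
  0 < L1 -> 0 < L2 -> (1 <= Nmax)%nat -> 0 < M -> 0 < c -> 0 <= t ->
  excess L2 (c * (L2 ^ 2 / (L1 * sqrt (INR Nmax)))) t <= 0 ->
  (forall s, 0 <= s <= t -> Hfun L1 L2 Nmax M (S n) s <= c ^ n * M * s) ->
  Hfun L1 L2 Nmax M (S (S n)) t <= c ^ S n * M * t.
Proof.
  intros hL1 hL2 hN hM hc ht hex IH.
  assert (hs : 1 <= sqrt (INR Nmax)).
  { rewrite <- sqrt_1; apply sqrt_le_1_alt.
    apply (le_INR 1) in hN; simpl in hN; exact hN. }
  set (K := L1 * sqrt (INR Nmax)) in *.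
  assert (hK : 0 < K) by (unfold K; nra).
  change (Hfun L1 L2 Nmax M (S (S n)) t) with
    (Rint (fun s => exp (L2 * (t - s)) * L1 * sqrt (INR Nmax)
                    * Hfun L1 L2 Nmax M (S n) s) 0 t).
  replace (fun s => exp (L2 * (t - s)) * L1 * sqrt (INR Nmax) * Hfun L1 L2 Nmax M (S n) s)
    with (fun s => exp (L2 * (t - s)) * K * Hfun L1 L2 Nmax M (S n) s)
    by (apply functional_extensionality; intro s; unfold K; ring).
  assert (hcn : 0 <= c ^ n) by (apply pow_le; lra).
  eapply Rle_trans.
  { apply (Rint_exp_kernel_le L2 K (c ^ n * M) t); [lra | lra | nra | exact ht | exact IH]. }
  unfold excess in hex.
  assert (hD : K * (exp (L2 * t) - 1 - L2 * t) <= c * L2 ^ 2 * t).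
  { apply Rle_trans with (K * (c * (L2 ^ 2 / K) * t)); [apply Rmult_le_compat_l; lra|].
    right; field; lra. }
  apply (Rmult_le_reg_r (L2 ^ 2)); [nra|].
  replace (K * (c ^ n * M) * (exp (L2 * t) - 1 - L2 * t) / L2 ^ 2 * L2 ^ 2)
    with (c ^ n * M * (K * (exp (L2 * t) - 1 - L2 * t))) by (field; lra).
  replace (c ^ S n * M * t * L2 ^ 2) with (c ^ n * M * (c * L2 ^ 2 * t)) by (simpl; ring).
  apply Rmult_le_compat_l; nra.
Qed.

Theorem mainTheorem6 (L1 L2 : R) (Nmax : nat) (M cbar tstar tbar : R)
  (hL1 : 0 < L1) (hL2 : 0 < L2) (hN : (1 <= Nmax)%nat) (hM : 0 < M)
  (hc0 : 0 < cbar) (hc1 : cbar < 1)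
  (htpos : 0 < tstar)
  (htroot : exp (L2 * tstar) - (L2 + L2 ^ 2 / (L1 * sqrt (INR Nmax))) * tstar - 1 = 0)
  (htuniq : forall t, 0 < t ->
     exp (L2 * t) - (L2 + L2 ^ 2 / (L1 * sqrt (INR Nmax))) * t - 1 = 0 -> t = tstar)
  (htbar : is_lub (fun t => 0 < t /\
     exp (L2 * t) - (L2 + cbar * (L2 ^ 2 / (L1 * sqrt (INR Nmax)))) * t - 1 < 0) tbar) :
  0 < tbar /\ tbar < tstar /\
  forall (k : nat) (t : R), (1 <= k)%nat -> 0 <= t <= tbar ->
    Hfun L1 L2 Nmax M k t <= cbar ^ (k - 1) * M * t.
Proof.
  set (B1 := L2 ^ 2 / (L1 * sqrt (INR Nmax))) in *.
  assert (hB1 : 0 < B1).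
  { apply Rdiv_lt_0_compat; [nra|].
    apply Rmult_lt_0_compat; [lra|].
    apply sqrt_lt_R0, (lt_INR 0); lia. }
  change (is_lub (excess_neg L2 (cbar * B1)) tbar) in htbar.
  assert (htbar_pos : 0 < tbar) by (apply (excess_lub_pos L2 (cbar * B1) tbar htbar); nra).
  split; [exact htbar_pos|split].
  - apply (excess_lub_lt L2 (cbar * B1) tbar htbar tstar htpos).
    unfold excess; assert (0 < (1 - cbar) * B1 * tstar) by
      (apply Rmult_lt_0_compat; nra).
    nra.
  - intros [|n] t hk; [lia|]; clear hk.
    replace (S n - 1)%nat with n by lia.
    revert t; induction n as [|n IH]; intros t ht; [simpl; lra|].
    apply Hfun_succ_le; auto; [lra | |].
    + exact (excess_le0_below_lub L2 (cbar * B1) tbar htbar t htbar_pos ht).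
    + intros s hs; apply IH; lra.
Qed.
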